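(* Let $c\ge1$ and define $f:\{0,1,2,\dots\}\to\mathbb{R}$ by $f(m)=(1-2^{-m})(c-m)$. Let $m^*$ be the largest integer $m$ at which $f$ attains its maximum. Then $\log_2 c-2<m^*\le\log_2 c+1$. *)

From Stdlib Require Import Reals.
Open Scope R_scope.

Definition f (c : R) (m : nat) : R := (1 - / 2 ^ m) * (c - INR m).

Definition log2 (x : R) : R := ln x / ln 2.

Definition is_largest_argmax (c : R) (m : nat) : Prop :=
  (forall k : nat, f c k <= f c m) /\
  (forall k : nat, f c k = f c m -> (k <= m)%nat).

(* Since f(m+1) - f(m) = (c - m + 1) / 2^(m+1) - 1, the function increases
   exactly while 2^(m+1) <= c - m + 1.  The largest maximiser M therefore
   satisfies c - M + 1 < 2^(M+1), giving c < 2^(M+2), and, when M > 0,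
   2^M <= c - M + 2 <= 2c. *)

From Pilot Require Import Defs.
From Stdlib Require Import Reals Lra Lia.
Open Scope R_scope.

Lemma f_succ_sub (c : R) (m : nat) :
  Defs.f c (S m) - Defs.f c m = (c - INR m + 1) / 2 ^ S m - 1.
Proof.
  unfold Defs.f; rewrite S_INR; simpl.
  assert (0 < 2 ^ m) by (apply pow_lt; lra).
  field; lra.
Qed.

Lemma f_le_succ_iff (c : R) (m : nat) :
  Defs.f c m <= Defs.f c (S m) <-> 2 ^ S m <= c - INR m + 1.
Proof.
  assert (Hpos : 0 < 2 ^ S m) by (apply pow_lt; lra).
  pose proof (f_succ_sub c m) as Hsub.
  assert (Hdiv : (c - INR m + 1) / 2 ^ S m * 2 ^ S m = c - INR m + 1)
    by (field; lra).
  split; intro H.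
  - assert (1 <= (c - INR m + 1) / 2 ^ S m) by lra. nra.
  - assert (1 <= (c - INR m + 1) / 2 ^ S m); [|lra].
    apply Rmult_le_reg_r with (2 ^ S m); lra.
Qed.

Lemma largest_argmax_succ_lt (c : R) (m : nat) :
  is_largest_argmax c m -> Defs.f c (S m) < Defs.f c m.
Proof.
  intros [Hmax Hlargest].
  destruct (Rle_lt_or_eq_dec _ _ (Hmax (S m))) as [Hlt | Heq]; [exact Hlt|].
  apply Hlargest in Heq; lia.
Qed.

Lemma INR_le_pow2 (m : nat) : INR m <= 2 ^ m.
Proof.
  induction m as [|m IH]; [simpl; lra|].
  rewrite S_INR; simpl.
  assert (1 <= 2 ^ m) by (apply pow_R1_Rle; lra).
  lra.
Qed.

Lemma largest_argmax_lt_pow2 (c : R) (m : nat) :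
  is_largest_argmax c m -> c < 2 ^ (m + 2).
Proof.
  intro Hm.
  assert (Hlt : c - INR m + 1 < 2 ^ S m).
  { apply Rnot_le_lt; rewrite <- f_le_succ_iff.
    pose proof (largest_argmax_succ_lt c m Hm); lra. }
  pose proof (INR_le_pow2 m); pose proof (pos_INR m).
  rewrite pow_add; simpl in Hlt |- *; lra.
Qed.

Lemma largest_argmax_pow2_le (c : R) (m : nat) :
  1 <= c -> is_largest_argmax c m -> 2 ^ m <= 2 * c.
Proof.
  intros Hc [Hmax _].
  destruct m as [|k]; [simpl; lra|].
  apply f_le_succ_iff in Hmax.
  pose proof (pos_INR k); lra.
Qed.

Lemma ln2_pos : 0 < ln 2.
Proof. rewrite <- ln_1; apply ln_increasing; lra. Qed.

Lemma log2_pow2 (n : nat) : log2 (2 ^ n) = INR n.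
Proof.
  pose proof ln2_pos.
  unfold log2; rewrite ln_pow by lra; field; lra.
Qed.

Lemma log2_double (x : R) : 0 < x -> log2 (2 * x) = log2 x + 1.
Proof.
  intro Hx; pose proof ln2_pos.
  unfold log2; rewrite ln_mult by lra; field; lra.
Qed.

Lemma log2_lt (x y : R) : 0 < x -> x < y -> log2 x < log2 y.
Proof.
  intros Hx Hxy; pose proof ln2_pos.
  unfold log2, Rdiv; apply Rmult_lt_compat_r.
  - apply Rinv_0_lt_compat; lra.
  - apply ln_increasing; lra.
Qed.

Lemma log2_le (x y : R) : 0 < x -> x <= y -> log2 x <= log2 y.
Proof.
  intros Hx [Hxy | ->]; [left; apply log2_lt; lra | right; reflexivity].
Qed.

Theorem lemma2 (c : R) (hc : 1 <= c) (mstar : nat)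
  (hm : is_largest_argmax c mstar) :
  log2 c - 2 < INR mstar /\ INR mstar <= log2 c + 1.
Proof.
  split.
  - assert (Hlog : log2 c < log2 (2 ^ (mstar + 2)))
      by (apply log2_lt; [lra | apply largest_argmax_lt_pow2; exact hm]).
    rewrite log2_pow2, plus_INR in Hlog; simpl in Hlog; lra.
  - rewrite <- log2_double, <- log2_pow2 by lra.
    apply log2_le; [apply pow_lt; lra | apply largest_argmax_pow2_le; assumption].
Qed.
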